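(* A function $f:\mathbb{N}\to\mathbb{N}$ is obliviously-computable if and only if $f$ is semilinear and nondecreasing.
   Context: A chemical reaction network (CRN) is a pair $(\mathcal{S},\mathcal{R})$ of a finite set of species and a finite set of reactions $(\vec{R},\vec{P})\in\mathbb{N}^{\mathcal{S}}\times\mathbb{N}^{\mathcal{S}}$. A configuration is $\vec{C}\in\mathbb{N}^{\mathcal{S}}$; a reaction is applicable if $\vec{R}\le\vec{C}$ and yields $\vec{C}-\vec{R}+\vec{P}$; reachability is via finite sequences of applicable reactions. To compute $f:\mathbb{N}\to\mathbb{N}$ the CRN has an input species $X$, output species $Y$, leader species $L$; the initial configuration for input $x$ has $x$ copies of $X$, one $L$, nothing else. $\vec{C}$ is stable if all configurations reachable from it have the same count of $Y$. The CRN stably computes $f$ if for every input $x$ and every $\vec{C}$ reachable from the initial configuration, some stable $\vec{O}$ reachable from $\vec{C}$ has $\vec{O}(Y)=f(x)$. The CRN is output-oblivious if $Y$ is never a reactant ($\vec{R}(Y)=0$ for all reactions). $f$ is obliviously-computable if stably computed by an output-oblivious CRN. A set $S\subseteq\mathbb{N}^d$ is semilinear if it is a finite Boolean combination of threshold sets $\{\vec{x}:\vec{a}\cdot\vec{x}\ge b\}$ ($\vec{a}\in\mathbb{Z}^d,b\in\mathbb{Z}$) and mod sets $\{\vec{x}:\vec{a}\cdot\vec{x}\equiv b\bmod c\}$ ($c\in\mathbb{N}_+$). A function is semilinear if it is a finite union of affine partial functions whose domains are disjoint semilinear sets. *)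

From mathcomp Require Import all_boot all_order all_algebra.
Set Implicit Arguments. Unset Strict Implicit. Unset Printing Implicit Defensive.
Import Order.TTheory GRing.Theory Num.Theory.

Record crn := CRN {
  species : finType;
  reactions : seq ({ffun species -> nat} * {ffun species -> nat});
  X_sp : species;
  Y_sp : species;
  L_sp : species
}.

Definition config (C : crn) := {ffun species C -> nat}.

Definition applicable (C : crn) (r : config C * config C) (c : config C) : bool :=
  [forall s, r.1 s <= c s].

Definition apply_rxn (C : crn) (r : config C * config C) (c : config C) : config C :=
  [ffun s => c s - r.1 s + r.2 s].

Definition step (C : crn) (c d : config C) : Prop :=
  exists2 r, r \in reactions C & applicable r c /\ d = apply_rxn r c.

Inductive reachable (C : crn) : config C -> config C -> Prop :=
| reach_refl c : reachable c c
| reach_step c d e : step c d -> reachable d e -> reachable c e.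

Definition init_config (C : crn) (x : nat) : config C :=
  [ffun s => if s == X_sp C then x else if s == L_sp C then 1 else 0].

Definition stable_config (C : crn) (c : config C) : Prop :=
  forall d, reachable c d -> d (Y_sp C) = c (Y_sp C).

Definition stably_computes (C : crn) (f : nat -> nat) : Prop :=
  forall x (c : config C), reachable (init_config C x) c ->
    exists o : config C, [/\ reachable c o, stable_config o & o (Y_sp C) = f x].

Definition output_oblivious (C : crn) : Prop :=
  forall r, r \in reactions C -> r.1 (Y_sp C) = 0.

Definition well_formed_crn (C : crn) : Prop :=
  [/\ X_sp C != Y_sp C, X_sp C != L_sp C & Y_sp C != L_sp C].

Definition obliviously_computable (f : nat -> nat) : Prop :=
  exists C : crn, [/\ well_formed_crn C, output_oblivious C & stably_computes C f].

(* finite Boolean combinations of threshold sets and mod sets *)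
Inductive sl_form :=
| SLThr of int & int
| SLMod of int & int & nat
| SLNot of sl_form
| SLAnd of sl_form & sl_form
| SLOr  of sl_form & sl_form.

Fixpoint sl_wf (F : sl_form) : bool :=
  match F with
  | SLThr _ _ => true
  | SLMod _ _ c => 0 < c
  | SLNot G => sl_wf G
  | SLAnd G H | SLOr G H => sl_wf G && sl_wf H
  end.

Fixpoint sl_mem (F : sl_form) (x : nat) : bool :=
  match F with
  | SLThr a b => (b <= a * x%:Z)%R
  | SLMod a b c => (a * x%:Z == b %[mod c%:Z])%Z
  | SLNot G => ~~ sl_mem G x
  | SLAnd G H => sl_mem G x && sl_mem H x
  | SLOr G H => sl_mem G x || sl_mem H x
  end.

Definition semilinear_set (A : nat -> Prop) : Prop :=
  exists F, sl_wf F /\ forall x, A x <-> sl_mem F x.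

Definition semilinear_fun (f : nat -> nat) : Prop :=
  exists (n : nat) (D : 'I_n -> nat -> Prop) (a b : 'I_n -> rat),
    [/\ forall i, semilinear_set (D i),
        forall i j x, D i x -> D j x -> i = j,
        forall x, exists i, D i x
      & forall i x, D i x -> ((f x)%:R = a i * x%:R + b i :> rat)%R].

Definition nondecreasing_fun (f : nat -> nat) : Prop :=
  forall m n, m <= n -> f m <= f n.

From mathcomp Require Import all_boot all_order all_algebra.
From mathcomp Require Import zify ring.
From Stdlib Require Import Classical ClassicalEpsilon.
Set Implicit Arguments. Unset Strict Implicit. Unset Printing Implicit Defensive.
Import Order.TTheory GRing.Theory Num.Theory.

(* Both directions go through eventually quilt-affine functions, i.e. f (z + p) = f z + q
   for all large z.

   Output-obliviousness makes the count of Y nondecreasing along runs, and any run from c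
   can be replayed from c + w. Hence the inputs x admit stable outputs c_x with c_x + X
   reaching c_(x+1). Extracting a subsequence along which every species count is constant
   or strictly increasing gives x0 < x1 with c_x0 <= c_x1; with w = c_x1 - c_x0 and
   p = x1 - x0, each c_x0 + m w is reachable from input x0 + m p and lies below some stable
   c_x, hence is stable, so f is affine along x0 + m p. Replaying a run from c_x0 + m w + r X
   after adding w shows that f (x0 + m p + r) - f (x0 + m p) is nondecreasing in m; being
   bounded, it is eventually constant, and f is eventually quilt-affine. Such an f is
   semilinear, with singletons and residue classes as pieces.

   Conversely, the pieces of a semilinear f are eventually periodic, so the increments
   f (z + P) - f z are eventually periodic, and monotonicity forces them to be constant.
   An eventually quilt-affine nondecreasing f is computed by a leader that walks through
   the states 0, ..., N + p - 1 (wrapping around from N + p - 1 to N), consuming one X per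
   step and emitting f (j + 1) - f j copies of Y on the j-th input. *)

(** * Monotone subsequences *)

Definition const_or_increasing (u : nat -> nat) :=
  (forall n, u n = u 0) \/ (forall n, u n < u n.+1).

Lemma increasing_chain (R : nat -> nat -> Prop) :
  (forall m, exists n, m < n /\ R m n) ->
  exists t : nat -> nat, forall n, t n < t n.+1 /\ R (t n) (t n.+1).
Proof. by case/(choice _)=> g gP; exists (fun n => iter n g 0) => n; apply: gP. Qed.

Lemma recurrent_or_unbounded (u : nat -> nat) :
  (exists v, forall N, exists2 n, N <= n & u n = v) \/
  (forall B, exists N, forall n, N <= n -> B < u n).
Proof.
have [|not_rec] := classic (exists v, forall N, exists2 n, N <= n & u n = v); first by left.
right; have avoid v : exists N, forall n, N <= n -> u n != v.
  apply: NNPP => no_N; apply: not_rec; exists v => N; apply: NNPP => no_n.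
  by apply: no_N; exists N => n le_Nn; apply/eqP => uv; apply: no_n; exists n.
elim=> [|B [N ltB]].
  by have [N neq0] := avoid 0; exists N => n /neq0; rewrite lt0n.
have [N' neqB] := avoid B.+1; exists (maxn N N') => n le_Nn.
by have := ltB n; have := neqB n; lia.
Qed.

Lemma const_or_increasing_subseq (u : nat -> nat) :
  exists t, (forall n, t n < t n.+1) /\ const_or_increasing (u \o t).
Proof.
have [[v rec_v]|unbounded] := recurrent_or_unbounded u.
  have [t tP] := @increasing_chain (fun _ n => u n = v) (fun m =>
    let: ex_intro2 n le_mn uv := rec_v m.+1 in ex_intro _ n (conj le_mn uv)).
  exists (t \o succn); split=> [n|]; first exact: (tP n.+1).1.
  by left=> n /=; rewrite !(tP _).2.
have [t tP] := @increasing_chain (fun m n => u m < u n) (fun m =>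
  let: ex_intro N ltN := unbounded (u m) in
  ex_intro _ (maxn N m.+1) (conj (leq_maxr _ _) (ltN _ (leq_maxl _ _)))).
by exists t; split=> [n|]; [exact: (tP n).1 | right=> n; exact: (tP n).2].
Qed.

Lemma const_or_increasing_comp (u s : nat -> nat) :
  (forall n, s n < s n.+1) -> const_or_increasing u -> const_or_increasing (u \o s).
Proof.
move=> s_incr [u_const|u_incr]; [left=> n /= | right=> n /=]; first by rewrite !u_const.
exact: homo_ltn ltn_trans u_incr _ _ (s_incr n).
Qed.

Lemma coordinatewise_monotone_subseq (V : finType) (a : nat -> {ffun V -> nat}) :
  exists t, (forall n, t n < t n.+1) /\
    forall v, const_or_increasing (fun n => a (t n) v).
Proof.
suff [t [t_incr tP]] : exists t, (forall n, t n < t n.+1) /\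
    forall v, v \in enum V -> const_or_increasing (fun n => a (t n) v).
  by exists t; split=> // v; apply: tP; rewrite mem_enum.
elim: (enum V) => [|v vs [t [t_incr tP]]]; first by exists id.
have [s [s_incr sP]] := const_or_increasing_subseq (fun n => a (t n) v).
exists (t \o s); split=> [n|w]; first exact: homo_ltn ltn_trans t_incr _ _ (s_incr n).
rewrite inE => /predU1P [->|/tP w_ok]; first exact: sP.
exact: const_or_increasing_comp w_ok.
Qed.

Lemma const_or_increasing_le01 (u : nat -> nat) : const_or_increasing u -> u 0 <= u 1.
Proof. by case=> [->|/(_ 0)/ltnW]. Qed.

Lemma const_or_increasing_progression (u : nat -> nat) M m :
  const_or_increasing u -> u 1 - u 0 <= M -> u 0 + m * (u 1 - u 0) <= u (m * M).
Proof.
case=> [u_const|u_incr] le_M; first by rewrite [u 1]u_const [u (m * M)]u_const subnn muln0 addn0.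
have grow n : u 0 + n <= u n.
  by elim: n => [|n IH]; rewrite ?addn0 // addnS (leq_ltn_trans IH (u_incr n)).
by apply: leq_trans (grow _); rewrite leq_add2l leq_mul2l le_M orbT.
Qed.

(** * Eventually quilt-affine functions *)

Lemma bounded_nondecreasing_eventually_const (h : nat -> nat) B :
  nondecreasing_fun h -> (forall m, h m <= B) -> exists M, forall m, M <= m -> h m = h M.
Proof.
elim: B h => [|B IH] h h_mono h_le.
  by exists 0 => m _; have := h_le m; have := h_le 0; lia.
have [[M hM]|h_ltB] := classic (exists M, h M = B.+1).
  by exists M => m le_Mm; have := h_mono _ _ le_Mm; have := h_le m; lia.
apply: IH h_mono _ => m; have := h_le m; rewrite leq_eqVlt => /predU1P [hm|//].
by case: h_ltB; exists m.
Qed.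

Lemma bounded_nondecreasing_family_eventually_const (I : finType) (h : I -> nat -> nat) B :
  (forall i, nondecreasing_fun (h i)) -> (forall i m, h i m <= B) ->
  exists M, forall i m, M <= m -> h i m = h i M.
Proof.
move=> h_mono h_le.
have /fin_all_exists [M MP] i := bounded_nondecreasing_eventually_const (h_mono i) (h_le i).
exists (\max_i M i) => i m le_m; have le_Mi : M i <= \max_i M i by apply: leq_bigmax.
by rewrite MP ?(MP i (\max_i M i)) //; apply: leq_trans le_m.
Qed.

Definition eventually_quilt_affine (f : nat -> nat) :=
  exists N p q, 0 < p /\ forall z, N <= z -> f (z + p) = f z + q.

Lemma quilt_affine_iter (f : nat -> nat) N p q :
  (forall z, N <= z -> f (z + p) = f z + q) ->
  forall k z, N <= z -> f (z + k * p) = f z + k * q.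
Proof.
move=> fP k z le_z; elim: k => [|k IH]; first by rewrite !mul0n !addn0.
have -> : z + k.+1 * p = z + k * p + p by rewrite mulSn; lia.
by rewrite fP ?IH ?mulSn; lia.
Qed.

Lemma quilt_affine_of_progression (f : nat -> nat) x0 p q :
  nondecreasing_fun f -> 0 < p ->
  (forall m, f (x0 + m * p) = f x0 + m * q) ->
  (forall m r, f (x0 + m * p + r) + q <= f (x0 + m.+1 * p + r)) ->
  eventually_quilt_affine f.
Proof.
move=> f_mono p_gt0 f_prog f_shift.
pose h (r : 'I_p) m := f (x0 + m * p + r) - f (x0 + m * p).
have h_mono r : nondecreasing_fun (h r).
  apply: homo_leq leqnn leq_trans _ => m; rewrite /h f_prog.
  by have := f_shift m r; rewrite f_prog mulSn; lia.
have h_le r m : h r m <= q.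
  have : f (x0 + m * p + r) <= f (x0 + m.+1 * p).
    by apply: f_mono; rewrite mulSn; have := ltn_ord r; lia.
  by rewrite /h !f_prog mulSn; lia.
have [M MP] := bounded_nondecreasing_family_eventually_const h_mono h_le.
exists (x0 + M * p), p, q; split=> // z le_z.
have [m [r [lt_rp z_eq]]] : exists m r, r < p /\ z = x0 + m * p + r.
  exists ((z - x0) %/ p), ((z - x0) %% p); rewrite ltn_pmod //.
  by have := divn_eq (z - x0) p; lia.
subst z; have le_Mm : M <= m by rewrite -ltnS -(ltn_pmul2r p_gt0) mulSn; lia.
have := MP (Ordinal lt_rp) m le_Mm; have := MP (Ordinal lt_rp) m.+1 (leqW le_Mm).
have := f_mono (x0 + m * p) (x0 + m * p + r) (leq_addr _ _).
have := f_mono (x0 + m.+1 * p) (x0 + m.+1 * p + r) (leq_addr _ _).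
have -> : x0 + m * p + r + p = x0 + m.+1 * p + r by rewrite mulSn; lia.
rewrite /h /= !f_prog; lia.
Qed.

Lemma quilt_affine_of_periodic_increments (f : nat -> nat) N P :
  nondecreasing_fun f -> 0 < P ->
  (forall x, N <= x -> f (x + P + P) - f (x + P) = f (x + P) - f x) ->
  eventually_quilt_affine f.
Proof.
move=> f_mono P_gt0 s_per; pose s x := f (x + P) - f x.
have f_step x : f (x + P) = f x + s x by rewrite /s [f x + _]addnC subnK // f_mono // leq_addr.
have f_iter x k : N <= x -> f (x + k * P) = f x + k * s x.
  move=> le_x; elim: k => [|k IH]; first by rewrite !mul0n !addn0.
  have s_k : s (x + k * P) = s x.
    elim: k {IH} => [|k IH]; first by rewrite mul0n addn0.
    have -> : x + k.+1 * P = x + k * P + P by rewrite mulSn; lia.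
    by rewrite -IH /s s_per //; lia.
  have -> : x + k.+1 * P = x + k * P + P by rewrite mulSn; lia.
  by rewrite f_step IH s_k mulSn; lia.
have s_succ x : N <= x -> s x.+1 = s x.
  move=> le_x; have le_Sx : N <= x.+1 by lia.
  have lower k : f x + k * s x <= f x.+1 + k * s x.+1.
    by rewrite -f_iter // -f_iter //; apply: f_mono; lia.
  have upper k : f x.+1 + k * s x.+1 <= f x + k.+1 * s x.
    by rewrite -f_iter // -f_iter //; apply: f_mono; rewrite mulSn; lia.
  (* Unequal slopes along x + k P and x.+1 + k P would let one overtake the other. *)
  have := f_mono x x.+1 (leqnSn x).
  case: (ltngtP (s x.+1) (s x)) => // lt_s.
    by have := lower (f x.+1).+1; nia.
  by have := upper (f x + s x).+1; nia.
have s_const x : N <= x -> s x = s N.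
  move=> /subnKC <-; elim: (x - N) => [|k IH]; first by rewrite addn0.
  by rewrite addnS s_succ // leq_addr.
by exists N, P, (s N); split=> // x le_x; rewrite f_step s_const.
Qed.

(** * Semilinear functions *)

Definition periodic_from (A : nat -> bool) N P := forall x, N <= x -> A (x + P) = A x.

Definition eventually_periodic (A : nat -> bool) := exists N P, 0 < P /\ periodic_from A N P.

Lemma periodic_from_mul (A : nat -> bool) N P k :
  periodic_from A N P -> periodic_from A N (k * P).
Proof.
move=> A_per x le_x; elim: k => [|k IH]; first by rewrite mul0n addn0.
have -> : x + k.+1 * P = x + k * P + P by rewrite mulSn; lia.
by rewrite A_per //; lia.
Qed.

Lemma eventually_periodic2 (A B : nat -> bool) :
  eventually_periodic A -> eventually_periodic B ->
  exists N P, [/\ 0 < P, periodic_from A N P & periodic_from B N P].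
Proof.
move=> [N1 [P1 [P1_gt0 A_per]]] [N2 [P2 [P2_gt0 B_per]]].
exists (maxn N1 N2), (P1 * P2); split; first by rewrite muln_gt0 P1_gt0.
  by move=> x le_x; rewrite mulnC (periodic_from_mul P2 A_per) //; lia.
by move=> x le_x; rewrite (periodic_from_mul P1 B_per) //; lia.
Qed.

Lemma sl_mem_eventually_periodic F : sl_wf F -> eventually_periodic (sl_mem F).
Proof.
elim: F => [a b|a b c|G IH|G IHG H IHH|G IHG H IHH] /=.
- move=> _; exists (absz b).+1, 1; split=> // x le_x /=.
  have [a_lt0|a_gt0|->] := ltrgtP a 0; last by rewrite !mul0r.
    have out y : (absz b < y)%N -> (b <= a * y%:Z)%R = false.
      by move=> lt_y; apply/negbTE/negP; nia.
    by rewrite !out //; lia.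
  have into y : (absz b < y)%N -> (b <= a * y%:Z)%R by move=> lt_y; nia.
  by rewrite !into //; lia.
- move=> c_gt0; exists 0, c; split=> // x _ /=.
  by rewrite PoszD mulrDr addrC modzMDl.
- by move=> /IH [N [P [P_gt0 G_per]]]; exists N, P; split=> // x /G_per /= ->.
- move=> /andP [/IHG G_ep /IHH H_ep].
  have [N [P [P_gt0 G_per H_per]]] := eventually_periodic2 G_ep H_ep.
  by exists N, P; split=> // x le_x /=; rewrite G_per ?H_per.
- move=> /andP [/IHG G_ep /IHH H_ep].
  have [N [P [P_gt0 G_per H_per]]] := eventually_periodic2 G_ep H_ep.
  by exists N, P; split=> // x le_x /=; rewrite G_per ?H_per.
Qed.

Lemma semilinear_family_periodic n (D : 'I_n -> nat -> Prop) :
  (forall i, semilinear_set (D i)) ->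
  exists N P, 0 < P /\ forall i x, N <= x -> D i x -> D i (x + P).
Proof.
move=> D_sl.
have /fin_all_exists [NP NP_ok] i : exists NP : nat * nat,
    0 < NP.2 /\ forall k x, NP.1 <= x -> D i x -> D i (x + k * NP.2).
  have [F [F_wf DF]] := D_sl i; have [N [P [P_gt0 F_per]]] := sl_mem_eventually_periodic F_wf.
  by exists (N, P); split=> // k x le_x; rewrite !DF (periodic_from_mul k F_per).
exists (\max_i (NP i).1), (\prod_i (NP i).2); split.
  by apply: prodn_gt0 => i; case: (NP_ok i).
move=> i x le_x; rewrite (bigD1 i) //= mulnC; apply: (NP_ok i).2.
by apply: leq_trans le_x; apply: leq_bigmax.
Qed.

Lemma semilinear_nondecreasing_quilt_affine (f : nat -> nat) :
  semilinear_fun f -> nondecreasing_fun f -> eventually_quilt_affine f.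
Proof.
case=> n [D [a [b [D_sl _ D_cover f_affine]]]] f_mono.
have [N [P [P_gt0 D_per]]] := semilinear_family_periodic D_sl.
apply: (quilt_affine_of_periodic_increments f_mono P_gt0 (N := N)) => x le_x.
have [i Dx] := D_cover x; have Dx1 := D_per i x le_x Dx.
have Dx2 := D_per i (x + P) (leq_trans le_x (leq_addr _ _)) Dx1.
apply/eqP; rewrite -(eqr_nat rat) !natrB ?f_mono ?leq_addr //.
by rewrite (f_affine i _ Dx2) (f_affine i _ Dx1) (f_affine i _ Dx) !natrD; apply/eqP; ring.
Qed.

Lemma semilinear_set1 n : semilinear_set (fun x => x = n).
Proof.
exists (SLAnd (SLThr 1 n) (SLThr (-1) (- n%:Z))); split=> // x /=.
by rewrite !mulN1r !mul1r lerN2 -eq_le; split=> [->|/eqP [->]].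
Qed.

Lemma semilinear_residue N p r : 0 < p -> r < p ->
  semilinear_set (fun x => N <= x /\ (x - N) %% p = r).
Proof.
move=> p_gt0 lt_rp; exists (SLAnd (SLThr 1 N) (SLMod 1 (N + r)%N p)).
split=> [|x /=]; first by rewrite /= p_gt0.
rewrite mul1r lez_nat !modz_nat eqz_nat; split=> [[le_Nx <-]|/andP [le_Nx /eqP]].
  by rewrite le_Nx modnDmr subnKC /=.
rewrite -{1}(subnKC le_Nx) => /eqP; rewrite eqn_modDl (modn_small lt_rp) => /eqP.
by split.
Qed.

Lemma quilt_affine_semilinear (f : nat -> nat) : eventually_quilt_affine f -> semilinear_fun f.
Proof.
case=> N [p [q [p_gt0 f_per]]].
pose D (i : 'I_(N + p)) : nat -> Prop :=
  if i < N then eq^~ (i : nat) else fun x => N <= x /\ (x - N) %% p = i - N.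
pose a (i : 'I_(N + p)) : rat := if i < N then 0%R else (q%:R / p%:R)%R.
pose b (i : 'I_(N + p)) : rat := ((f i)%:R - a i * i%:R)%R.
exists (N + p), D, a, b; split.
- move=> i; rewrite /D; case: ifP => [_|/negbT]; first exact: semilinear_set1.
  by rewrite -leqNgt => le_Ni; apply: semilinear_residue; have := ltn_ord i; lia.
- move=> i j x; rewrite /D.
  by case: ltnP => le_iN; case: ltnP => le_jN Di Dj; apply: ord_inj; lia.
- move=> x; have [lt_xN|le_Nx] := ltnP x N.
    by exists (Ordinal (ltn_addr p lt_xN)); rewrite /D /= lt_xN.
  have lt_r : N + (x - N) %% p < N + p by rewrite ltn_add2l ltn_mod.
  by exists (Ordinal lt_r); rewrite /D /= ltnNge leq_addr /= addKn.
- move=> i x; rewrite /D /b; case: ifP => [_ ->|lt_iN [le_Nx x_mod]].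
    by rewrite addrC subrK.
  have a_i : a i = (q%:R / p%:R)%R by rewrite /a lt_iN.
  have le_Ni : N <= i by rewrite leqNgt lt_iN.
  have -> : x = i + (x - N) %/ p * p.
    by have := divn_eq (x - N) p; rewrite x_mod; lia.
  rewrite (quilt_affine_iter f_per _ le_Ni) a_i !natrD !natrM.
  by field; rewrite pnatr_eq0 -lt0n.
Qed.

Section Configurations.
Variable C : crn.
Local Notation cf := (config C).

Definition cadd (c d : cf) : cf := [ffun s => c s + d s].
Definition csub (c d : cf) : cf := [ffun s => c s - d s].
Definition cscale (m : nat) (c : cf) : cf := [ffun s => m * c s].
Definition inputs (k : nat) : cf := [ffun s => if s == X_sp C then k else 0].

Lemma reachable_trans (c d e : cf) : reachable c d -> reachable d e -> reachable c e.
Proof. by elim=> // a b b' ab _ IH /IH; apply: reach_step. Qed.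

Lemma step_cadd (c d w : cf) : step c d -> step (cadd c w) (cadd d w).
Proof.
case=> r r_in [/forallP r_app ->]; exists r => //; split.
  by apply/forallP => s; rewrite ffunE; apply: leq_trans (r_app s) (leq_addr _ _).
by apply/ffunP => s; rewrite !ffunE; have := r_app s; lia.
Qed.

Lemma reachable_cadd (c d w : cf) : reachable c d -> reachable (cadd c w) (cadd d w).
Proof.
elim=> [a|a b e ab _ IH]; first exact: reach_refl.
exact: reach_step (step_cadd w ab) IH.
Qed.

Lemma caddA (a b c : cf) : cadd (cadd a b) c = cadd a (cadd b c).
Proof. by apply/ffunP => s; rewrite !ffunE addnA. Qed.

Lemma cadd_inputs0 (c : cf) : cadd c (inputs 0) = c.
Proof. by apply/ffunP => s; rewrite !ffunE; case: ifP; rewrite addn0. Qed.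

Lemma inputsD m n : cadd (inputs m) (inputs n) = inputs (m + n).
Proof. by apply/ffunP => s; rewrite !ffunE; case: ifP. Qed.

Lemma init_cadd_inputs x k : cadd (init_config C x) (inputs k) = init_config C (x + k).
Proof. by apply/ffunP => s; rewrite !ffunE; case: ifP => //; case: ifP. Qed.

Lemma reachable_init_cadd_inputs x k (c : cf) :
  reachable (init_config C x) c -> reachable (init_config C (x + k)) (cadd c (inputs k)).
Proof. by rewrite -init_cadd_inputs; apply: reachable_cadd. Qed.

Lemma stable_config_le (c e : cf) :
  (forall s, e s <= c s) -> stable_config c -> stable_config e.
Proof.
move=> le_ec c_stable d e_d; have := reachable_cadd (csub c e) e_d.
have -> : cadd e (csub c e) = c by apply/ffunP => s; rewrite !ffunE (subnKC (le_ec s)).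
by move/c_stable; rewrite !ffunE; have := le_ec (Y_sp C); lia.
Qed.

Definition progression (c0 w : cf) m := cadd c0 (cscale m w).

Lemma progression_reachable x0 p (c0 c1 : cf) :
  (forall s, c0 s <= c1 s) -> reachable (init_config C x0) c0 ->
  reachable (cadd c0 (inputs p)) c1 ->
  forall m, reachable (init_config C (x0 + m * p)) (progression c0 (csub c1 c0) m).
Proof.
move=> le01 x0_c0 c0_c1; elim=> [|m IH].
  rewrite mul0n addn0 (_ : progression _ _ 0 = c0) //.
  by apply/ffunP => s; rewrite !ffunE mul0n addn0.
have := reachable_cadd (cscale m (csub c1 c0)) c0_c1.
rewrite (_ : cadd c1 _ = progression c0 (csub c1 c0) m.+1); last first.
  by apply/ffunP => s; rewrite !ffunE mulSn; have := le01 s; lia.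
apply: reachable_trans; have -> : x0 + m.+1 * p = x0 + m * p + p by rewrite mulSn; lia.
rewrite (_ : cadd (cadd c0 _) _ = cadd (progression c0 (csub c1 c0) m) (inputs p)).
  exact: reachable_init_cadd_inputs.
by apply/ffunP => s; rewrite !ffunE; lia.
Qed.

End Configurations.

Arguments inputs {C} k.

(** * Output-oblivious computation *)

Section ObliviousComputation.
Variable C : crn.
Local Notation cf := (config C).

Hypothesis C_oblivious : output_oblivious C.

Lemma reachable_output_le (c d : cf) : reachable c d -> c (Y_sp C) <= d (Y_sp C).
Proof.
elim=> // a b e [r r_in [_ ->]] _; apply: leq_trans.
by rewrite ffunE (C_oblivious r_in) subn0 leq_addr.
Qed.

Variable f : nat -> nat.
Hypothesis C_computes : stably_computes C f.

Lemma computes_stable_output x (c : cf) :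
  reachable (init_config C x) c -> stable_config c -> c (Y_sp C) = f x.
Proof. by move=> x_c c_stable; have [o [c_o _ <-]] := C_computes x_c; rewrite (c_stable _ c_o). Qed.

Lemma computes_reachable_output_le x (c : cf) :
  reachable (init_config C x) c -> c (Y_sp C) <= f x.
Proof. by move=> /C_computes [o [c_o _ <-]]; apply: reachable_output_le. Qed.

Lemma computes_cadd_le x y (c w : cf) :
  reachable (init_config C x) c -> reachable (init_config C y) (cadd c w) ->
  f x + w (Y_sp C) <= f y.
Proof.
move=> x_c y_cw; have [o [c_o _ o_Y]] := C_computes x_c.
have := computes_reachable_output_le (reachable_trans y_cw (reachable_cadd w c_o)).
by rewrite ffunE o_Y.
Qed.

Lemma oblivious_nondecreasing : nondecreasing_fun f.
Proof.
apply: homo_leq leqnn leq_trans _ => x.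
have := reachable_init_cadd_inputs 1 (reach_refl (init_config C x)); rewrite addn1 => x_x1.
by apply: leq_trans (computes_cadd_le (reach_refl _) x_x1); rewrite leq_addr.
Qed.

Lemma stable_chain : exists c : nat -> cf, forall x,
  [/\ reachable (init_config C x) (c x), stable_config (c x), c x (Y_sp C) = f x
    & forall k, reachable (cadd (c x) (inputs k)) (c (x + k))].
Proof.
have exists_output (xc : nat * cf) : exists o, reachable (init_config C xc.1) xc.2 ->
    [/\ reachable xc.2 o, stable_config o & o (Y_sp C) = f xc.1].
  have [/C_computes [o oP]|not_r] := classic (reachable (init_config C xc.1) xc.2).
    by exists o.
  by exists xc.2 => /not_r.
have [g gP] := choice _ exists_output.
pose c := fix c x := if x is x'.+1 then g (x, cadd (c x') (inputs 1)) else g (0, init_config C 0).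
have c_next x : reachable (init_config C x) (c x) -> reachable (cadd (c x) (inputs 1)) (c x.+1).
  by move=> /(reachable_init_cadd_inputs 1); rewrite addn1 => /(gP (x.+1, _)) [].
have cP x : [/\ reachable (init_config C x) (c x), stable_config (c x) & c x (Y_sp C) = f x].
  elim: x => [|x [x_c _ _]].
    by have [] := gP (0, init_config C 0) (reach_refl _).
  have := reachable_init_cadd_inputs 1 x_c; rewrite addn1 => x1_c.
  by have [] := gP (x.+1, _) x1_c; split=> //; apply: reachable_trans x1_c _.
exists c => x; have [x_c c_stable c_Y] := cP x; split=> // k.
elim: k => [|k IH]; first by rewrite cadd_inputs0 addn0; apply: reach_refl.
have -> : inputs k.+1 = cadd (inputs k) (inputs 1) :> cf by rewrite inputsD addn1.
rewrite -caddA addnS; apply: reachable_trans (reachable_cadd _ IH) _.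
by apply: c_next; case: (cP (x + k)).
Qed.

Lemma stable_progression : exists x0 p (c0 w : cf), 0 < p /\ forall m,
  reachable (init_config C (x0 + m * p)) (progression c0 w m) /\
  stable_config (progression c0 w m).
Proof.
have [c cP] := stable_chain.
have [t [t_incr tP]] := coordinatewise_monotone_subseq c.
have le01 s : c (t 0) s <= c (t 1) s := const_or_increasing_le01 (tP s).
have [x0_c _ _ chain] := cP (t 0).
have := chain (t 1 - t 0); rewrite (subnKC (ltnW (t_incr 0))) => c0_c1.
exists (t 0), (t 1 - t 0), (c (t 0)), (csub (c (t 1)) (c (t 0))).
split=> [|m]; first by rewrite subn_gt0.
split; first exact: (progression_reachable le01 x0_c c0_c1).
pose M := \max_s csub (c (t 1)) (c (t 0)) s.
have [_ c_stable _ _] := cP (t (m * M)); apply: stable_config_le c_stable => s.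
rewrite !ffunE; apply: const_or_increasing_progression (tP s) _.
by have := @leq_bigmax _ (fun s => csub (c (t 1)) (c (t 0)) s) s; rewrite ffunE.
Qed.

Lemma oblivious_quilt_affine : eventually_quilt_affine f.
Proof.
have [x0 [p [c0 [w [p_gt0 progP]]]]] := stable_progression.
have f_prog m : f (x0 + m * p) = f x0 + m * w (Y_sp C).
  have [x_c c_stable] := progP m; have [x0_c c0_stable] := progP 0.
  rewrite -(computes_stable_output x_c c_stable) -[x0]addn0 -(mul0n p).
  by rewrite -(computes_stable_output x0_c c0_stable) !ffunE mul0n addn0.
apply: (quilt_affine_of_progression oblivious_nondecreasing p_gt0 f_prog) => m r.
have [x_c _] := progP m; have [x1_c _] := progP m.+1.
apply: computes_cadd_le (reachable_init_cadd_inputs r x_c) _.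
rewrite (_ : cadd _ w = cadd (progression c0 w m.+1) (inputs r)).
  exact: reachable_init_cadd_inputs.
by apply/ffunP => s; rewrite !ffunE mulSn; lia.
Qed.

End ObliviousComputation.

(** * A counter computing an eventually quilt-affine function *)

Section CounterCRN.
Variable f : nat -> nat.
Hypothesis f_mono : nondecreasing_fun f.
Variables N p' q : nat.
(* The period is written p'.+1 so that the states 'I_(N + p').+1 admit [inord]. *)
Local Notation p := p'.+1.
Hypothesis f_quilt : forall z, N <= z -> f (z + p) = f z + q.

Definition state_of j := if j < N then j else N + (j - N) %% p.
Definition next_state i := if i.+1 < N + p then i.+1 else N.
Definition increment i := f i.+1 - f i.

Lemma state_of_lt j : state_of j < (N + p').+1.
Proof.
rewrite /state_of; case: ifP => [|_]; first lia.
by have := ltn_pmod (j - N) (ltn0Sn p'); lia.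
Qed.

Lemma state_of0 : state_of 0 = 0.
Proof. by rewrite /state_of; case: N. Qed.

Lemma next_state_of j : next_state (state_of j) = state_of j.+1.
Proof.
rewrite /next_state /state_of; case: (ltnP j.+1 N) => [lt_j1N|le_Nj1].
  have lt_jN : j < N by lia.
  by rewrite lt_jN ifT //; lia.
case: (ltnP j N) => [lt_jN|le_Nj].
  have -> : j.+1 = N by lia.
  by rewrite subnn mod0n addn0; case: ifP.
have -> : j.+1 - N = (j - N) + 1 by lia.
rewrite -modnDml; have := ltn_pmod (j - N) (ltn0Sn p'); move: ((j - N) %% p) => r lt_rp.
have [lt_r1|le_pr1] := ltnP (N + r).+1 (N + p); first by rewrite modn_small; lia.
have -> : r + 1 = p by lia.
by rewrite modnn addn0.
Qed.

Lemma increment_state_of j : increment (state_of j) = increment j.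
Proof.
rewrite /increment /state_of; case: ifP => // /negbT; rewrite -leqNgt => le_Nj.
set r := (j - N) %% p; set k := (j - N) %/ p.
have j_eq : j = N + r + k * p by have := divn_eq (j - N) p; lia.
have := quilt_affine_iter f_quilt k (leq_addr r N).
have := quilt_affine_iter f_quilt k (leqW (leq_addr r N)).
by rewrite addSn -j_eq; lia.
Qed.

Local Notation K := (N + p').
Local Notation nstate := (@inord K).

Definition counter_species : finType := option (option (option 'I_K.+1)).
Definition spX : counter_species := None.
Definition spY : counter_species := Some None.
Definition spL : counter_species := Some (Some None).
Definition spS (i : 'I_K.+1) : counter_species := Some (Some (Some i)).

Definition leader_rxn : {ffun counter_species -> nat} * {ffun counter_species -> nat} :=
  ([ffun s => nat_of_bool (s == spL)],
   [ffun s => if s == spY then f 0 else nat_of_bool (s == spS (nstate 0))]).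

Definition state_rxn (i : 'I_K.+1) :
    {ffun counter_species -> nat} * {ffun counter_species -> nat} :=
  ([ffun s => nat_of_bool ((s == spS i) || (s == spX))],
   [ffun s => if s == spY then increment i else nat_of_bool (s == spS (nstate (next_state i)))]).

Definition counter_crn : crn :=
  CRN (leader_rxn :: map state_rxn (enum 'I_K.+1)) spX spY spL.

Definition after_inputs x j : config counter_crn :=
  [ffun s => if s == spX then x - j else if s == spY then f j
             else nat_of_bool (s == spS (nstate (state_of j)))].

Definition counter_invariant x (c : config counter_crn) :=
  c = init_config counter_crn x \/ exists2 j, j <= x & c = after_inputs x j.

Lemma counter_reactions r :
  r \in reactions counter_crn -> r = leader_rxn \/ exists i, r = state_rxn i.
Proof. by rewrite inE => /predU1P [->|/mapP [i _ ->]]; [left | right; exists i]. Qed.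

Lemma inord_state_of j : nstate (state_of j) = state_of j :> nat.
Proof. by rewrite inordK // state_of_lt. Qed.

Lemma after_inputs0 x :
  after_inputs x 0 = @apply_rxn counter_crn leader_rxn (init_config counter_crn x).
Proof.
by apply/ffunP => s; rewrite !ffunE state_of0; case: s => [[[i|]|]|] //=; rewrite subn0 addn0.
Qed.

Lemma after_inputsS x j : j < x ->
  after_inputs x j.+1 = @apply_rxn counter_crn (state_rxn (nstate (state_of j))) (after_inputs x j).
Proof.
move=> lt_jx; apply/ffunP => s; rewrite !ffunE; case: s => [[[i|]|]|] /=.
- by rewrite orbF inord_state_of next_state_of subnn.
- by [].
- by rewrite inord_state_of increment_state_of /increment; have := f_mono (leqnSn j); lia.
- by lia.
Qed.

Lemma counter_invariant_step x (c d : config counter_crn) :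
  counter_invariant x c -> step c d -> counter_invariant x d.
Proof.
move=> c_inv [r /counter_reactions r_rxn [/forallP r_app ->]].
case: c_inv r_rxn r_app => [->|[j le_jx ->]] [->|[i ->]] r_app.
- by right; exists 0; rewrite ?after_inputs0.
- by have := r_app (spS i); rewrite !ffunE /= eqxx.
- by have := r_app spL; rewrite !ffunE.
- have := r_app (spS i); have := r_app spX; rewrite !ffunE /= eqxx /= subn_gt0 => lt_jx.
  by rewrite lt0b => /eqP [->]; right; exists j.+1; rewrite ?after_inputsS.
Qed.

Lemma counter_invariant_reachable x (c d : config counter_crn) :
  reachable c d -> counter_invariant x c -> counter_invariant x d.
Proof. by elim=> // a b e a_b _ IH a_inv; apply/IH/(counter_invariant_step a_inv). Qed.

Lemma after_all_inputs_stable x : stable_config (after_inputs x x).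
Proof.
have no_step d : ~ step (after_inputs x x) d.
  case=> r /counter_reactions r_rxn [/forallP r_app _].
  case: r_rxn r_app => [->|[i ->]] r_app; first by have := r_app spL; rewrite !ffunE.
  by have := r_app spX; rewrite !ffunE /= subnn.
have stuck c d : reachable c d -> c = after_inputs x x -> d = c.
  by case=> // a b e a_b _ a_eq; case: (no_step b); rewrite -a_eq.
by move=> d /stuck ->.
Qed.

Lemma after_inputs_reachable x j : j <= x -> reachable (after_inputs x j) (after_inputs x x).
Proof.
move=> le_jx; have [k k_eq] : exists k, x - j = k by exists (x - j).
elim: k j le_jx k_eq => [|k IH] j le_jx k_eq.
  have -> : j = x by lia.
  exact: reach_refl.
apply: reach_step (IH j.+1 _ _); [|lia|lia].
exists (state_rxn (nstate (state_of j))).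
  by rewrite inE; apply/predU1P; right; apply: map_f; rewrite mem_enum.
split; last by rewrite after_inputsS //; lia.
apply/forallP => s; rewrite !ffunE; case: s => [[[i|]|]|] //=; last by lia.
by rewrite orbF; case: (_ == _).
Qed.

Lemma counter_computes : stably_computes counter_crn f.
Proof.
move=> x c x_c; exists (after_inputs x x).
split; [|exact: after_all_inputs_stable|by rewrite ffunE].
have [->|[j le_jx ->]] := counter_invariant_reachable x_c (or_introl erefl).
  apply: reach_step (after_inputs_reachable (leq0n x)).
  exists leader_rxn; first by rewrite inE eqxx.
  split; last by rewrite after_inputs0.
  by apply/forallP => s; rewrite !ffunE; case: s => [[[i|]|]|].
exact: after_inputs_reachable.
Qed.

Lemma counter_obliviously_computable : obliviously_computable f.
Proof.
exists counter_crn; split=> //; last exact: counter_computes.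
by move=> r /counter_reactions [->|[i ->]]; rewrite ffunE.
Qed.

End CounterCRN.

Theorem theorem8 (f : nat -> nat) :
  obliviously_computable f <-> semilinear_fun f /\ nondecreasing_fun f.
Proof.
split=> [[C [_ C_oblivious C_computes]]|[f_sl f_mono]].
  split; first exact/quilt_affine_semilinear/(oblivious_quilt_affine C_oblivious C_computes).
  exact: (oblivious_nondecreasing C_oblivious C_computes).
have [N [[|p'] [q [//= _ f_quilt]]]] := semilinear_nondecreasing_quilt_affine f_sl f_mono.
exact: (counter_obliviously_computable f_mono f_quilt).
Qed.
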